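(* Let $d\ge 3$, let $\mathcal M$ be a model of $\mathrm{PQM}_d$ with domain $\mathbb M$, and let $m\in\mathbb M$. If $p,q\in F^{\mathcal M}(m)$ are incompatible, then neither $p$ nor $q$ is a minimal element of $F^{\mathcal M}(m)$ with respect to inclusion.
   Context: Notation. For $d\ge 1$, $\mathbb H_d$ is the set of complex linear subspaces of $\mathbb C^d$, ordered by inclusion $\le$, with $\top=\mathbb C^d$, $\bot=\{0\}$, $p^\bot$ the orthogonal complement, $p\wedge q=p\cap q$ and $p\vee q=p+q$. $\mathbb U_d$ is the set of unitary operators on $\mathbb C^d$, and for $U\in\mathbb U_d$, $p\in\mathbb H_d$, $U(p)=\{Uv: v\in p\}$. The Sasaki projection is $p\,\&\,q := q\cap(q^\bot+p)$. Subspaces $p,q$ are compatible iff $p=(p\wedge q)\vee(p\wedge q^\bot)$ (equivalently, the orthogonal projectors onto $p$ and $q$ commute); otherwise they are incompatible. Language $\mathcal L_d$: a first-order language without equality and without constants, having a unary function symbol $u_U$ for each $U\in\mathbb U_d$, a unary function symbol $\pi_q$ for each $q\in\mathbb H_d$, and a unary relation symbol $[\,\cdot:p]$ for each $p\in\mathbb H_d$. Theory $\mathrm{PQM}_d$ (over $\mathcal L_d$) has the following axioms, for all $p,q\in\mathbb H_d$ and $U\in\mathbb U_d$: ($\neg\bot$) $\exists x\,\neg[x:\bot]$; ($\top$) $\forall x\,[x:\top]$; ($\le$) if $p\le q$: $\forall x\,([x:p]\to[x:q])$; ($\wedge$) if $p,q$ are compatible: $\forall x\,([x:p]\wedge[x:q]\to[x:p\wedge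 q])$; ($\pi_i$) $\forall x\,([x:p]\to[\pi_q(x):p\,\&\,q])$; ($\pi_c$) if $p\le q$: $\forall x\,([\pi_p(\pi_q(x)):\bot]\to[\pi_p(x):\bot])$; ($\pi_\bot$) $\forall x\,([\pi_q(x):\bot]\to[x:q^\bot])$; ($u_i$) $\forall x\,([x:p]\to[u_U(x):U(p)])$; ($u_e$) $\forall x\,([u_U(x):p]\to[x:U^{-1}(p)])$. Filter: for an $\mathcal L_d$-structure $\mathcal M$ with domain $\mathbb M$ and $m\in\mathbb M$, $F^{\mathcal M}(m)=\{p\in\mathbb H_d : [m:p]^{\mathcal M}\}$, where $[\,\cdot:p]^{\mathcal M}$ is the interpretation of the relation symbol $[\,\cdot:p]$ in $\mathcal M$. *)

From mathcomp Require Import all_boot all_algebra.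
From mathcomp Require Import complex.
From mathcomp Require Import reals Rstruct.
Set Implicit Arguments.
Unset Strict Implicit.
Unset Printing Implicit Defensive.
Import GRing.Theory Num.Theory.
Local Open Scope ring_scope.

Definition C : numClosedFieldType := complex Rdefinitions.R.

(* Vectors of C^d are row vectors 'rV[C]_d.  A complex linear subspace of C^d
   is represented canonically by the matrix <<A>>%MS whose row space is it:
   two matrices with the same row space have the same <<_>>, so this gives a
   faithful (Leibniz) encoding of the set H_d of subspaces. *)
Definition Hd (d : nat) := {A : 'M[C]_d | (<<A>>%MS == A)}.

Definition mkH (d : nat) (A : 'M[C]_d) : Hd d :=
  exist _ <<A>>%MS (introT eqP (genmx_id A)).

Definition Hmx (d : nat) (p : Hd d) : 'M[C]_d := sval p.

Definition inH (d : nat) (v : 'rV[C]_d) (p : Hd d) : bool := (v <= Hmx p)%MS.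

Definition leH (d : nat) (p q : Hd d) : bool := (Hmx p <= Hmx q)%MS.
Definition topH (d : nat) : Hd d := mkH 1%:M.
Definition botH (d : nat) : Hd d := mkH 0.
Definition meetH (d : nat) (p q : Hd d) : Hd d := mkH (Hmx p :&: Hmx q)%MS.
Definition joinH (d : nat) (p q : Hd d) : Hd d := mkH (Hmx p + Hmx q)%MS.

Definition adjmx (m n : nat) (A : 'M[C]_(m, n)) : 'M[C]_(n, m) :=
  (map_mx Num.conj A)^T.

(* orthogonal complement w.r.t. <u,w> = sum_j u_j conj(w_j):
   the rows u with u *m adjmx A = 0, i.e. u orthogonal to every row of A *)
Definition orthH (d : nat) (p : Hd d) : Hd d := mkH (kermx (adjmx (Hmx p))).

Definition sasaki (d : nat) (p q : Hd d) : Hd d := meetH q (joinH (orthH q) p).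

Definition compatible (d : nat) (p q : Hd d) : Prop :=
  p = joinH (meetH p q) (meetH p (orthH q)).

(* Unitary operators on C^d (as matrices acting on column vectors). *)
Definition is_unitary (d : nat) (U : 'M[C]_d) : bool := U *m adjmx U == 1%:M.
Definition Ud (d : nat) := {U : 'M[C]_d | is_unitary U}.
Definition Umx (d : nat) (U : Ud d) : 'M[C]_d := sval U.

(* image of a subspace under a matrix M acting on column vectors:
   U(p) = {U v | v in p}; for row vectors r = v^T this is r *m M^T. *)
Definition imH (d : nat) (M : 'M[C]_d) (p : Hd d) : Hd d := mkH (Hmx p *m M^T).
Definition UimH (d : nat) (U : Ud d) (p : Hd d) : Hd d := imH (Umx U) p.
Definition UinvimH (d : nat) (U : Ud d) (p : Hd d) : Hd d := imH (invmx (Umx U)) p.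

(* An L_d-structure: a domain together with interpretations of the unary
   function symbols u_U (U in U_d), pi_q (q in H_d), and of the unary
   relation symbols [. : p] (p in H_d).  No constants, no equality. *)
Record LStructure (d : nat) := {
  dom :> Type;
  u_ : Ud d -> dom -> dom;
  pi_ : Hd d -> dom -> dom;
  rel : Hd d -> dom -> Prop
}.
Arguments dom {d} M : rename.
Arguments u_ {d} M U x : rename.
Arguments pi_ {d} M q x : rename.
Arguments rel {d} M p x : rename.

Definition PQM_model (d : nat) (M : LStructure d) : Prop :=
  (exists x : M, ~ rel M (botH d) x) /\
  (forall x : M, rel M (topH d) x) /\
  (forall p q : Hd d, leH p q -> forall x : M, rel M p x -> rel M q x) /\
  (forall p q : Hd d, compatible p q ->
               forall x : M, rel M p x -> rel M q x -> rel M (meetH p q) x) /\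
  (forall p q : Hd d, forall x : M,
               rel M p x -> rel M (sasaki p q) (pi_ M q x)) /\
  (forall p q : Hd d, leH p q -> forall x : M,
               rel M (botH d) (pi_ M p (pi_ M q x)) -> rel M (botH d) (pi_ M p x)) /\
  (forall q : Hd d, forall x : M,
               rel M (botH d) (pi_ M q x) -> rel M (orthH q) x) /\
  (forall (p : Hd d) (U : Ud d) (x : M),
               rel M p x -> rel M (UimH U p) (u_ M U x)) /\
  (forall (p : Hd d) (U : Ud d) (x : M),
               rel M p (u_ M U x) -> rel M (UinvimH U p) x).

Definition filt (d : nat) (M : LStructure d) (m : M) : Hd d -> Prop :=
  fun p => rel M p m.

Definition minimal_in (d : nat) (S : Hd d -> Prop) (p : Hd d) : Prop :=
  S p /\ forall r : Hd d, S r -> leH r p -> r = p.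
Arguments PQM_model {d} M : rename.
Arguments filt {d} M m p : rename.
Arguments minimal_in {d} S p : rename.

(* Let u be a vector of p orthogonal to p /\ q but not to q (it exists because
   p and q are incompatible), and p' := p /\ u^perp, a proper subspace of p.
   We show [m : p'].  Put y := pi_{p'^perp}(m).  By (pi_i) applied to p and to
   q, y lies in the line of u and in s := p'^perp /\ (p' \/ q).  The
   orthogonal projection v of u on s is neither 0 nor parallel to u, and u is
   orthogonal to s /\ v^perp, so y also lies in the line of v.  In dimension
   at least 3, two distinct non-orthogonal lines in the filter of y force
   [y : bot]: in a real three-dimensional frame containing them, intersecting
   compatible planes and hyperplanes produces two new lines of the filter that
   make a strictly larger angle, and iterating reaches two orthogonal lines,
   which contradict (/\).  Finally (pi_bot) turns [y : bot] into [m : p'].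
   The argument is symmetric in p and q. *)

From Pilot Require Import Defs.
From mathcomp Require Import all_boot all_order all_algebra complex reals Rstruct.
From mathcomp Require Import lra ring.
Import Order.TTheory GRing.Theory Num.Theory.
Local Open Scope ring_scope.
Set Implicit Arguments.
Unset Strict Implicit.
Unset Printing Implicit Defensive.

Local Notation R := Rdefinitions.R.
Local Notation "x %:C" := (real_complex R x).

Lemma adjmxK m n (A : 'M[C]_(m, n)) : adjmx (adjmx A) = A.
Proof. by apply/matrixP=> i j; rewrite !mxE conjCK. Qed.

Lemma adjmxM m n p (A : 'M[C]_(m, n)) (B : 'M[C]_(n, p)) :
  adjmx (A *m B) = adjmx B *m adjmx A.
Proof. by rewrite /adjmx map_mxM trmx_mul. Qed.

Lemma conjC_real_complex (x : R) : (x%:C)^* = x%:C :> C.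
Proof. exact: conjc_real. Qed.

Section HermitianGeometry.
Variable d : nat.
Local Notation V := 'rV[C]_d.

Definition orthmx m (A : 'M[C]_(m, d)) : 'M[C]_d := kermx (adjmx A).

Definition hdot (u v : V) : C := (u *m adjmx v) 0 0.

Lemma sub_orthmx m k (A : 'M[C]_(m, d)) (B : 'M[C]_(k, d)) :
  (B <= orthmx A)%MS = (B *m adjmx A == 0).
Proof. by apply/sub_kermxP/eqP. Qed.

Lemma sub_orthmxC m k (A : 'M[C]_(m, d)) (B : 'M[C]_(k, d)) :
  (B <= orthmx A)%MS = (A <= orthmx B)%MS.
Proof.
rewrite !sub_orthmx; apply/eqP/eqP=> BA0.
  by rewrite -[A]adjmxK -adjmxM BA0 /adjmx map_mx0 trmx0.
by rewrite -[B]adjmxK -adjmxM BA0 /adjmx map_mx0 trmx0.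
Qed.

Lemma orthmxS m k (A : 'M[C]_(m, d)) (B : 'M[C]_(k, d)) :
  (A <= B)%MS -> (orthmx B <= orthmx A)%MS.
Proof. by move=> AB; rewrite sub_orthmxC (submx_trans AB) // -sub_orthmxC. Qed.

Lemma eqmx_orthmx m k (A : 'M[C]_(m, d)) (B : 'M[C]_(k, d)) :
  (A :=: B)%MS -> (orthmx A :=: orthmx B)%MS.
Proof.
by move=> /eqmxP/andP[AB BA]; apply/eqmxP; rewrite (orthmxS AB) (orthmxS BA).
Qed.

Lemma mxrank_orthmx m (A : 'M[C]_(m, d)) : \rank (orthmx A) = (d - \rank A)%N.
Proof.
by rewrite /orthmx mxrank_ker /adjmx mxrank_tr (mxrank_map (Num.conj : {rmorphism C -> C})).
Qed.

Lemma hdotE (u v : V) : hdot u v = \sum_j u 0 j * (v 0 j)^*.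
Proof. by rewrite /hdot !mxE; apply: eq_bigr => j _; rewrite !mxE. Qed.

Lemma hdotvv_ge0 (u : V) : 0 <= hdot u u.
Proof. by rewrite hdotE; apply: sumr_ge0 => j _; apply: mul_conjC_ge0. Qed.

Lemma hdotvv_eq0 (u : V) : hdot u u = 0 -> u = 0.
Proof.
rewrite hdotE => /psumr_eq0P uu0; apply/rowP => j; rewrite mxE.
have /eqP := uu0 (fun k _ => mul_conjC_ge0 (u 0 k)) j isT.
by rewrite -normCK expf_eq0 /= normr_eq0 => /eqP.
Qed.

Lemma hdotC (u v : V) : hdot v u = (hdot u v)^*.
Proof.
rewrite !hdotE rmorph_sum; apply: eq_bigr => j _.
by rewrite rmorphM /= conjCK mulrC.
Qed.

Lemma hdotDl (u v w : V) : hdot (u + v) w = hdot u w + hdot v w.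
Proof. by rewrite /hdot mulmxDl mxE. Qed.

Lemma hdotBl (u v w : V) : hdot (u - v) w = hdot u w - hdot v w.
Proof. by rewrite /hdot mulmxBl !mxE. Qed.

Lemma hdotZl a (u w : V) : hdot (a *: u) w = a * hdot u w.
Proof. by rewrite /hdot -scalemxAl mxE. Qed.

Lemma hdotDr (u v w : V) : hdot w (u + v) = hdot w u + hdot w v.
Proof. by rewrite hdotC hdotDl rmorphD /= -!hdotC. Qed.

Lemma hdotZr a (u w : V) : hdot w (a *: u) = a^* * hdot w u.
Proof. by rewrite hdotC hdotZl rmorphM /= -hdotC. Qed.

Lemma sub_orthmx_hdot (u v : V) : (u <= orthmx v)%MS = (hdot u v == 0).
Proof.
rewrite sub_orthmx /hdot; apply/eqP/eqP => [-> | uv0]; first by rewrite mxE.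
by apply/rowP => j; rewrite ord1 uv0 mxE.
Qed.

Lemma hdot_orthmx m (A : 'M[C]_(m, d)) (u w : V) :
  (u <= orthmx A)%MS -> (w <= A)%MS -> hdot u w = 0.
Proof. by move=> uA wA; apply/eqP; rewrite -sub_orthmx_hdot (submx_trans uA) ?orthmxS. Qed.

Lemma capmx_orthmx m (A : 'M[C]_(m, d)) : (A :&: orthmx A :=: (0 : 'M[C]_d))%MS.
Proof.
apply/eqmxP; rewrite sub0mx andbT; apply/row_subP => i.
have : (row i (A :&: orthmx A) <= A :&: orthmx A)%MS by exact: row_sub.
rewrite sub_capmx sub_orthmx => /andP[/submxP[D vD] /eqP vA0].
rewrite (hdotvv_eq0 (u := row i _)) ?sub0mx //.
by rewrite /hdot {2}vD adjmxM mulmxA vA0 mul0mx mxE.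
Qed.

Lemma addsmx_orthmx_full m (A : 'M[C]_(m, d)) : row_full (A + orthmx A)%MS.
Proof.
rewrite -col_leq_rank -[X in (X <= _)%N](subnKC (rank_leq_col A)) -mxrank_orthmx.
by rewrite -mxrank_sum_cap capmx_orthmx mxrank0 addn0.
Qed.

Lemma orthmxK m (A : 'M[C]_(m, d)) : (orthmx (orthmx A) :=: A)%MS.
Proof.
apply/eqmx_sym/eqmxP; have sA : (A <= orthmx (orthmx A))%MS by rewrite -sub_orthmxC.
by rewrite -(mxrank_leqif_eq sA) !mxrank_orthmx subKn ?rank_leq_col.
Qed.

Lemma orthmx_decomp m (A : 'M[C]_(m, d)) (v : V) :
  exists2 a, (a <= A)%MS & (v - a <= orthmx A)%MS.
Proof.
have /sub_addsmxP[[x y] /= ->] : (v <= A + orthmx A)%MS.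
  exact: submx_full (addsmx_orthmx_full A).
by exists (x *m A); rewrite ?submxMl // addrC addKr submxMl.
Qed.

Lemma addsmx_orthmx_cap m k (A : 'M[C]_(m, d)) (B : 'M[C]_(k, d)) :
  (B <= A)%MS -> (B + (orthmx B :&: A) :=: A)%MS.
Proof.
move=> BA; apply: eqmx_trans (matrix_modl (orthmx B) BA) _.
exact: capTmx (addsmx_orthmx_full B).
Qed.

Lemma capmx_orthmx_relcompl k m (W : 'M[C]_(k, d)) (X : 'M[C]_(m, d)) :
  (W <= X)%MS -> (X :&: orthmx (X :&: orthmx W) <= W)%MS.
Proof.
move=> WX; apply/row_subP => i; set z := row i _.
have : (z <= X :&: orthmx (X :&: orthmx W))%MS by exact: row_sub.
rewrite sub_capmx => /andP[zX zc].
have [a aW zaW] := orthmx_decomp W z.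
have zaX : (z - a <= X :&: orthmx W)%MS.
  by rewrite sub_capmx zaW addmx_sub // eqmx_opp (submx_trans aW).
have zza : hdot z (z - a) = 0 := hdot_orthmx zc zaX.
have aza : hdot a (z - a) = 0.
  by rewrite hdotC (hdot_orthmx zaW aW) rmorph0.
have /hdotvv_eq0/eqP : hdot (z - a) (z - a) = 0 by rewrite hdotBl zza aza subrr.
by rewrite subr_eq0 => /eqP ->.
Qed.

Lemma capmx_orthmx_defectC m k (P : 'M[C]_(m, d)) (Q : 'M[C]_(k, d)) :
  (P :&: orthmx (P :&: Q) <= orthmx Q)%MS ->
  (Q :&: orthmx (Q :&: P) <= orthmx P)%MS.
Proof.
move=> defPQ; rewrite sub_orthmxC -(addsmx_orthmx_cap (capmxSl P Q)) addsmx_sub.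
apply/andP; split.
  rewrite sub_orthmxC; apply: submx_trans (capmxSr _ _) _.
  by apply: orthmxS; rewrite capmxC.
rewrite sub_orthmxC; apply: submx_trans (capmxSl _ _) _.
by rewrite sub_orthmxC capmxC.
Qed.

Lemma exists_unit_scale (g : V) : g != 0 ->
  exists2 s : R, 0 < s & hdot (s^-1%:C *: g) (s^-1%:C *: g) = 1.
Proof.
move=> g0; pose x := complex.Re (hdot g g).
have gg : hdot g g = x%:C by rewrite [LHS]complexE ger0_Im ?hdotvv_ge0 // mulr0 addr0.
have x0 : 0 < x.
  rewrite lt_def -lecR -gg hdotvv_ge0 andbT; apply: contra g0 => /eqP x0.
  by apply/eqP/hdotvv_eq0; rewrite gg x0.
exists (Num.sqrt x); first by rewrite sqrtr_gt0.
rewrite hdotZl hdotZr conjC_real_complex gg -!rmorphM /=.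
have sx0 : Num.sqrt x != 0 by rewrite gt_eqF ?sqrtr_gt0.
by rewrite -{3}(sqr_sqrtr (ltW x0)) mulrA -expr2 -exprMn mulVf // expr1n.
Qed.

Lemma exists_unit_orthmx m (A : 'M[C]_(m, d)) : (\rank A < d)%N ->
  exists2 f : V, hdot f f = 1 & (f <= orthmx A)%MS.
Proof.
move=> rkA; have [i ri] : exists i, row i (orthmx A) != 0.
  apply/existsP; rewrite -negb_forall; apply: contraL rkA => /forallP A0.
  have /eqP : orthmx A = 0 by apply/row_matrixP => i; rewrite row0; apply/eqP/A0.
  by rewrite -mxrank_eq0 mxrank_orthmx subn_eq0 -leqNgt.
have [s _ unit] := exists_unit_scale ri.
by exists (s^-1%:C *: row i (orthmx A)); rewrite // scalemx_sub ?row_sub.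
Qed.

Lemma capmx_adds_orthmx (a h k : V) : hdot h k != 0 ->
  ((a + h) :&: orthmx k <= hdot h k *: a - hdot a k *: h)%MS.
Proof.
move=> hk0; apply/row_subP => i.
have : (row i ((a + h) :&: orthmx k) <= (a + h) :&: orthmx k)%MS := row_sub i _.
rewrite sub_capmx sub_orthmx_hdot => /andP[/sub_addsmxP[[x y] /= ->]].
rewrite [x]mx11_scalar [y]mx11_scalar !mul_scalar_mx hdotDl !hdotZl addr_eq0.
move=> /eqP yE; apply/sub_rVP; exists (x 0 0 / hdot h k).
have -> : y 0 0 = - (x 0 0 * hdot a k) / hdot h k by rewrite yE opprK mulfK.
by apply/rowP => j; rewrite !mxE; field.
Qed.

Lemma exists_orthonormal_pair (u v : V) : u != 0 -> ~~ (v <= u)%MS ->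
  hdot v u != 0 ->
  exists f1 f2 : V, exists2 r : R, 0 < r &
    [/\ hdot f1 f1 = 1, hdot f2 f2 = 1, hdot f1 f2 = 0,
        (u :=: f1)%MS & (v :=: (f1 + r%:C *: f2)%R)%MS].
Proof.
move=> u0 vu vu0; have [s1 s10 f11] := exists_unit_scale u0.
set f1 := s1^-1%:C *: u in f11.
have s1C0 : s1^-1%:C != 0 by rewrite (inj_eq (@complexI _)) invr_eq0 gt_eqF.
set al := hdot v f1; have al0 : al != 0 by rewrite /al hdotZr mulf_neq0 ?conjC_eq0.
set g := al^-1 *: v - f1.
have gf1 : hdot g f1 = 0 by rewrite hdotBl hdotZl mulVf // f11 subrr.
have g0 : g != 0.
  apply: contraNneq vu => /eqP; rewrite subr_eq0 => /eqP vf1.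
  by rewrite -[v](scalerKV al0) vf1 scalerA scalemx_sub.
have [s2 s20 f22] := exists_unit_scale g0.
exists f1, (s2^-1%:C *: g), s2 => //; split => //.
- by rewrite hdotZr hdotC gf1 conjC0 !mulr0.
- exact/eqmx_sym/eqmx_scale.
rewrite scalerA -rmorphM /= divff ?gt_eqF // rmorph1 scale1r /g addrC subrK.
by apply/eqmx_sym/eqmx_scale; rewrite invr_eq0.
Qed.

Lemma sub_orthmx_adds m k (A : 'M[C]_(m, d)) (B : 'M[C]_(k, d)) (u : V) :
  (u <= orthmx A)%MS -> (u <= orthmx B)%MS -> (u <= orthmx (A + B)%MS)%MS.
Proof.
move=> uA uB; rewrite (sub_orthmxC (A + B)%MS u) addsmx_sub.
by rewrite -(sub_orthmxC A u) -(sub_orthmxC B u) uA uB.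
Qed.

Section ProjectionOnSasaki.
Variables (P Q : 'M[C]_d) (u : V).
Hypotheses (uP : (u <= P)%MS) (uPQ : (u <= orthmx (P :&: Q))%MS)
  (uQ : ~~ (u <= orthmx Q)%MS).
Let W := (P :&: orthmx u)%MS.
Let s := (orthmx W :&: (W + Q))%MS.

Lemma exists_proj_nonparallel :
  exists v : V, [/\ (v <= s)%MS, ~~ (v <= u)%MS & (u <= orthmx (s :&: orthmx v)%MS)%MS].
Proof.
have uW : (u <= orthmx W)%MS by rewrite sub_orthmxC capmxSr.
have u0 : u != 0 by apply: contraNneq uQ => ->; rewrite sub0mx.
have Nus : ~~ (u <= s)%MS.
  apply: contra u0 => /(submx_trans)/(_ (capmxSr _ _)) /sub_addsmxP[[x z] /= uE].
  have zP : (z *m Q <= P)%MS.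
    have -> : z *m Q = u - x *m W by rewrite uE addrC addKr.
    by rewrite addmx_sub // eqmx_opp (submx_trans (submxMl _ _)) ?capmxSl.
  have zPQ : (z *m Q <= P :&: Q)%MS by rewrite sub_capmx zP submxMl.
  apply/eqP/hdotvv_eq0; rewrite [in X in hdot _ X]uE hdotDr.
  by rewrite (hdot_orthmx uW (submxMl _ _)) (hdot_orthmx uPQ zPQ) addr0.
have Nuos : ~~ (u <= orthmx s)%MS.
  apply: contra uQ => us; apply: submx_trans (sub_orthmx_adds uW us) (orthmxS _).
  by rewrite /s (addsmx_orthmx_cap (addsmxSl W Q)) addsmxSr.
have [v vs uvs] := orthmx_decomp s u; exists v; split; first exact: vs.
  apply/negP => /sub_rVP[be vE]; have [be0 | be0] := eqVneq be 0.
    by move: uvs; rewrite vE be0 scale0r subr0; apply/negP.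
  by move: Nus; rewrite -[u](scalerK be0) -vE scalemx_sub.
rewrite -{1}(subrK v u); apply: addmx_sub.
  exact: (submx_trans uvs (orthmxS (capmxSl _ _))).
by rewrite sub_orthmxC capmxSr.
Qed.

End ProjectionOnSasaki.

End HermitianGeometry.

Record vec3 := Vec3 { v1 : R; v2 : R; v3 : R }.

Definition dot3 (a b : vec3) : R := v1 a * v1 b + v2 a * v2 b + v3 a * v3 b.

Definition lin3 (al : R) (a : vec3) (be : R) (b : vec3) : vec3 :=
  Vec3 (al * v1 a + be * v1 b) (al * v2 a + be * v2 b) (al * v3 a + be * v3 b).

Definition scale3 (mu : R) (a : vec3) : vec3 := lin3 mu a 0 a.

(* The vector of the plane spanned by [a] and [h] that is orthogonal to [c]. *)
Definition perp3 (c a h : vec3) : vec3 := lin3 (dot3 h c) a (- dot3 a c) h.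

Definition e1 := Vec3 1 0 0.

(* [G] abstracts the rays whose lines belong to the filter of a point [y] of a
   model, and [P] stands for [y : bot].  If [a] and [b] are in the filter, so
   are the plane [a + h] and the hyperplane orthogonal to [k := perp3 b a h];
   as [k] lies in that plane the two are compatible, and they meet in the line
   of [perp3 k a h]. *)
Definition ray_filter (G : vec3 -> Prop) (P : Prop) :=
  [/\ forall a b h, G a -> G b -> dot3 h (perp3 b a h) != 0 ->
        G (perp3 (perp3 b a h) a h),
      forall a b, G a -> G b -> dot3 a b = 0 -> P &
      forall a mu, G a -> mu != 0 -> G (scale3 mu a)].

Lemma ray_filter_tilt G P r s : ray_filter G P ->
  G e1 -> G (Vec3 1 r 0) -> G (Vec3 (1 + s ^+ 2) r (r * s)).
Proof.
case=> Gperp _ Gscale Ge1 Gr.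
have hk0 : dot3 (Vec3 0 1 s) (perp3 (Vec3 1 r 0) e1 (Vec3 0 1 s)) != 0.
  rewrite /perp3 /dot3 /lin3 /= (_ : _ + _ = - (1 + s ^+ 2)); last by ring.
  by rewrite oppr_eq0 gt_eqF // ltr_pwDl ?sqr_ge0.
have -> : Vec3 (1 + s ^+ 2) r (r * s) =
    scale3 (-1) (perp3 (perp3 (Vec3 1 r 0) e1 (Vec3 0 1 s)) e1 (Vec3 0 1 s)).
  by rewrite /scale3 /perp3 /lin3 /dot3 /=; congr Vec3; ring.
by apply: Gscale _ _ (Gperp _ _ _ Ge1 Gr hk0) _; rewrite oppr_eq0 oner_eq0.
Qed.

Lemma ray_filter_wide G P r : ray_filter G P -> 0 < r -> 8 <= r ^+ 2 ->
  G e1 -> G (Vec3 1 r 0) -> P.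
Proof.
move=> GP r0 r8 Ge1 Gr.
pose S := Num.sqrt (r ^+ 2 - 8).
have S0 : 0 <= S := sqrtr_ge0 _.
have S2 : S ^+ 2 = r ^+ 2 - 8 by rewrite sqr_sqrtr // subr_ge0.
(* [mu ^+ 2] is a root of [t ^+ 2 + (2 - r ^+ 2) * t + 1 + r ^+ 2], which makes the
   tilted rays for [mu] and [- mu] orthogonal. *)
pose mu := Num.sqrt ((r ^+ 2 - 2 + r * S) / 2).
have mu2 : mu ^+ 2 = (r ^+ 2 - 2 + r * S) / 2 by rewrite sqr_sqrtr //; nra.
case: (GP) => _ Gorth _; apply: Gorth (ray_filter_tilt mu GP Ge1 Gr)
  (ray_filter_tilt (- mu) GP Ge1 Gr) _.
rewrite /dot3 /= sqrrN.
transitivity ((1 + mu ^+ 2) ^+ 2 + r ^+ 2 - r ^+ 2 * mu ^+ 2); first by ring.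
rewrite mu2; transitivity (r ^+ 2 * (S ^+ 2 - (r ^+ 2 - 8)) / 4); first by field.
by rewrite S2 subrr mulr0 mul0r.
Qed.

Definition frame3 (q1 q2 q3 a : vec3) : vec3 :=
  Vec3 (v1 a * v1 q1 + v2 a * v1 q2 + v3 a * v1 q3)
       (v1 a * v2 q1 + v2 a * v2 q2 + v3 a * v2 q3)
       (v1 a * v3 q1 + v2 a * v3 q2 + v3 a * v3 q3).

Section OrthonormalFrame.
Variables q1 q2 q3 : vec3.
Hypotheses (q11 : dot3 q1 q1 = 1) (q22 : dot3 q2 q2 = 1) (q33 : dot3 q3 q3 = 1)
  (q12 : dot3 q1 q2 = 0) (q13 : dot3 q1 q3 = 0) (q23 : dot3 q2 q3 = 0).
Local Notation Q := (frame3 q1 q2 q3).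

Lemma dot3_frame3 a b : dot3 (Q a) (Q b) = dot3 a b.
Proof.
transitivity (v1 a * v1 b * dot3 q1 q1 + v2 a * v2 b * dot3 q2 q2
  + v3 a * v3 b * dot3 q3 q3 + (v1 a * v2 b + v2 a * v1 b) * dot3 q1 q2
  + (v1 a * v3 b + v3 a * v1 b) * dot3 q1 q3
  + (v2 a * v3 b + v3 a * v2 b) * dot3 q2 q3); first by rewrite /dot3 /=; ring.
by rewrite q11 q22 q33 q12 q13 q23 /dot3; ring.
Qed.

Lemma frame3_lin al a be b : Q (lin3 al a be b) = lin3 al (Q a) be (Q b).
Proof. by rewrite /frame3 /lin3 /=; congr Vec3; ring. Qed.

Lemma frame3_perp c a h : Q (perp3 c a h) = perp3 (Q c) (Q a) (Q h).
Proof. by rewrite /perp3 frame3_lin !dot3_frame3. Qed.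

Lemma ray_filter_frame3 G P : ray_filter G P -> ray_filter (fun a => G (Q a)) P.
Proof.
case=> Gperp Gorth Gscale; split.
- move=> a b h Ga Gb hk0; rewrite !frame3_perp.
  by apply: Gperp; rewrite // -frame3_perp dot3_frame3.
- by move=> a b Ga Gb ab0; apply: Gorth Ga Gb _; rewrite dot3_frame3.
- by move=> a mu Ga mu0; rewrite /scale3 frame3_lin; apply: Gscale.
Qed.

End OrthonormalFrame.

(* The frame sends [e1] and [Vec3 1 r' 0] to the tilted rays [(2, r, r)] and
   [(2, r, -r)]; in the new coordinates the angle between the two rays grows. *)
Lemma ray_filter_step G P r : ray_filter G P -> 0 < r ->
  G e1 -> G (Vec3 1 r 0) ->
  exists r' G', [/\ r' ^+ 2 = r ^+ 2 + r ^+ 4 / 4, 0 < r', ray_filter G' P,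
                    G' e1 & G' (Vec3 1 r' 0)].
Proof.
move=> GP r0 Ge1 Gr; case: (GP) => _ _ Gscale.
pose sg := Num.sqrt (4 + r ^+ 2); pose n1 := (Num.sqrt (4 + 2 * r ^+ 2))^-1.
have sg0 : 0 < sg by rewrite sqrtr_gt0; nra.
have sg2 : sg ^+ 2 = 4 + r ^+ 2 by rewrite sqr_sqrtr //; nra.
have n10 : 0 < n1 by rewrite invr_gt0 sqrtr_gt0; nra.
have n12 : n1 ^+ 2 * (4 + 2 * r ^+ 2) = 1.
  by rewrite exprVn sqr_sqrtr ?mulVf //; nra.
pose q1 := Vec3 (2 * n1) (r * n1) (r * n1).
pose q2 := Vec3 (2 * r * n1 / sg) (r ^+ 2 * n1 / sg) (- (4 + r ^+ 2) * n1 / sg).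
pose q3 := Vec3 (- r / sg) (2 / sg) 0.
have sgn0 : sg != 0 by rewrite gt_eqF.
have q11 : dot3 q1 q1 = 1 by rewrite -n12 /dot3 /=; ring.
have sg2K : (4 + r ^+ 2) / sg ^+ 2 = 1 by rewrite -sg2 divff // expf_neq0.
have q22 : dot3 q2 q2 = 1.
  rewrite /dot3 /=.
  transitivity (n1 ^+ 2 * (4 + 2 * r ^+ 2) * ((4 + r ^+ 2) / sg ^+ 2)).
    by field.
  by rewrite n12 sg2K mulr1.
have q33 : dot3 q3 q3 = 1 by rewrite -sg2K /dot3 /=; field.
have q12 : dot3 q1 q2 = 0 by rewrite /dot3 /=; field.
have q13 : dot3 q1 q3 = 0 by rewrite /dot3 /=; field.
have q23 : dot3 q2 q3 = 0 by rewrite /dot3 /=; field.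
exists (r * sg / 2), (fun a => G (frame3 q1 q2 q3 a)); split.
- by rewrite expr_div_n exprMn sg2; field.
- by rewrite divr_gt0 ?mulr_gt0.
- exact: ray_filter_frame3.
- have -> : frame3 q1 q2 q3 e1 = scale3 n1 (Vec3 (1 + 1 ^+ 2) r (r * 1)).
    by rewrite /scale3 /lin3 /frame3 /=; congr Vec3; ring.
  by apply: Gscale _ _ (ray_filter_tilt _ GP Ge1 Gr) (lt0r_neq0 n10).
- have -> : frame3 q1 q2 q3 (Vec3 1 (r * sg / 2) 0) =
      scale3 (n1 * (2 + r ^+ 2) / 2) (Vec3 (1 + (-1) ^+ 2) r (r * -1)).
    by rewrite /scale3 /lin3 /frame3 /=; congr Vec3; field.
  apply: Gscale _ _ (ray_filter_tilt _ GP Ge1 Gr) _.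
  by rewrite gt_eqF // divr_gt0 // mulr_gt0 //; nra.
Qed.

Lemma ray_filter_nonorth G P r : ray_filter G P -> 0 < r ->
  G e1 -> G (Vec3 1 r 0) -> P.
Proof.
move=> GP r0 Ge1 Gr; pose c := r ^+ 4 / 4.
have c0 : 0 < c by rewrite divr_gt0 // exprn_gt0.
have [n nc] : exists n : nat, 8 <= n%:R * c.
  exists (Num.Def.archi_bound (8 / c)).
  by rewrite -ler_pdivrMr // ltW // archi_boundP // divr_ge0 // ltW.
have cs : forall s, r <= s -> c <= s ^+ 4 / 4.
  move=> s rs; rewrite /c ler_pM2r ?invr_gt0 //.
  by apply: (lerXn2r 4); rewrite // nnegrE ltW // (lt_le_trans r0).
clearbody c.
suff grow : forall n G s, ray_filter G P -> r <= s ->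
    8 <= s ^+ 2 + n%:R * c -> G e1 -> G (Vec3 1 s 0) -> P.
  by apply: (grow n G r GP (lexx r) _ Ge1 Gr); rewrite (le_trans nc) // lerDr sqr_ge0.
clear n nc; elim=> [|n IHn] G' s G'P rs sn G'e1 G's; have s0 : 0 < s := lt_le_trans r0 rs.
  by apply: ray_filter_wide G'P s0 _ G'e1 G's; move: sn; rewrite mul0r addr0.
have [s8 | s8] := lerP 8 (s ^+ 2); first exact: ray_filter_wide G'P s0 s8 G'e1 G's.
have [s' [G'' [s'2 s'0 G''P G''e1 G''s']]] := ray_filter_step G'P s0 G'e1 G's.
have cs4 := cs _ rs.
apply: (IHn G'' s' G''P _ _ G''e1 G''s').
  by have := sqr_ge0 (s ^+ 2); rewrite -exprM; nra.
by move: sn; rewrite s'2 -natr1; lra.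
Qed.

Section SubspaceEncoding.
Variable d : nat.

Definition spanH m (A : 'M[C]_(m, d)) : Hd d := mkH <<A>>%MS.

Lemma mkH_eqmx (A B : 'M[C]_d) : (A :=: B)%MS -> mkH A = mkH B.
Proof.
rewrite /mkH => /eq_genmx eqAB; move: (introT _ _) (introT _ _); rewrite eqAB.
by move=> AA BB; rewrite (eq_irrelevance AA BB).
Qed.

Lemma spanH_eqmx m k (A : 'M[C]_(m, d)) (B : 'M[C]_(k, d)) :
  (A :=: B)%MS -> spanH A = spanH B.
Proof. by move=> /eq_genmx eqAB; rewrite /spanH eqAB. Qed.

Lemma Hmx_spanH m (A : 'M[C]_(m, d)) : (Hmx (spanH A) :=: A)%MS.
Proof. by rewrite /Hmx /= genmx_id; apply: genmxE. Qed.

Lemma spanH_Hmx (p : Hd d) : spanH (Hmx p) = p.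
Proof.
rewrite /spanH (mkH_eqmx (genmxE _)); case: p => A genA; rewrite /mkH /Hmx /=.
by move: (introT _ _); rewrite (eqP genA) => genA'; rewrite (eq_irrelevance genA' genA).
Qed.

Lemma eqmx_spanH m k (A : 'M[C]_(m, d)) (B : 'M[C]_(k, d)) :
  spanH A = spanH B -> (A :=: B)%MS.
Proof.
by move=> eqAB; apply: eqmx_trans (eqmx_sym (Hmx_spanH A)) _; rewrite eqAB; apply: Hmx_spanH.
Qed.

Lemma leH_spanH m k (A : 'M[C]_(m, d)) (B : 'M[C]_(k, d)) :
  leH (spanH A) (spanH B) = (A <= B)%MS.
Proof. by rewrite /leH !Hmx_spanH. Qed.

Lemma botH_spanH : botH d = spanH (0 : 'M[C]_d).
Proof. exact/mkH_eqmx/eqmx_sym/genmxE. Qed.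

Lemma meetH_spanH m k (A : 'M[C]_(m, d)) (B : 'M[C]_(k, d)) :
  meetH (spanH A) (spanH B) = spanH (A :&: B)%MS.
Proof. exact/mkH_eqmx/(eqmx_trans (cap_eqmx (Hmx_spanH _) (Hmx_spanH _)))/eqmx_sym/genmxE. Qed.

Lemma joinH_spanH m k (A : 'M[C]_(m, d)) (B : 'M[C]_(k, d)) :
  joinH (spanH A) (spanH B) = spanH (A + B)%MS.
Proof. exact/mkH_eqmx/(eqmx_trans (adds_eqmx (Hmx_spanH _) (Hmx_spanH _)))/eqmx_sym/genmxE. Qed.

Lemma orthH_spanH m (A : 'M[C]_(m, d)) : orthH (spanH A) = spanH (orthmx A).
Proof. exact/mkH_eqmx/(eqmx_trans (eqmx_orthmx (Hmx_spanH _)))/eqmx_sym/genmxE. Qed.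

Lemma sasaki_spanH m k (A : 'M[C]_(m, d)) (B : 'M[C]_(k, d)) :
  sasaki (spanH A) (spanH B) = spanH (B :&: (orthmx B + A))%MS.
Proof. by rewrite /sasaki orthH_spanH joinH_spanH meetH_spanH. Qed.

Lemma compatible_spanH m k (A : 'M[C]_(m, d)) (B : 'M[C]_(k, d)) :
  (A <= (A :&: B) + (A :&: orthmx B))%MS -> compatible (spanH A) (spanH B).
Proof.
move=> splitA; rewrite /compatible orthH_spanH !meetH_spanH joinH_spanH.
apply: spanH_eqmx; apply/eqmxP; rewrite splitA.
by rewrite addsmx_sub !capmxSl.
Qed.

Lemma compatible_spanH_defect (P Q : 'M[C]_d) :
  (P :&: orthmx (P :&: Q) <= orthmx Q)%MS -> compatible (spanH P) (spanH Q).
Proof.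
move=> defPQ; apply: compatible_spanH.
rewrite -{1}(addsmx_orthmx_cap (capmxSl P Q)) addsmxS // sub_capmx capmxSr.
by rewrite capmxC.
Qed.

End SubspaceEncoding.

Section ModelSemantics.
Variables (d : nat) (M : LStructure d).
Hypothesis HM : PQM_model M.

Definition satmx m (A : 'M[C]_(m, d)) (x : M) : Prop := Defs.rel M (spanH A) x.
Definition pimx m (A : 'M[C]_(m, d)) (x : M) : M := pi_ M (spanH A) x.

Lemma satmx_Hmx (p : Hd d) x : satmx (Hmx p) x <-> Defs.rel M p x.
Proof. by rewrite /satmx spanH_Hmx. Qed.

Lemma satmxS m k (A : 'M[C]_(m, d)) (B : 'M[C]_(k, d)) x :
  (A <= B)%MS -> satmx A x -> satmx B x.
Proof. by case: HM => _ [_ [Hle _]] AB; apply: Hle; rewrite leH_spanH. Qed.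

Lemma satmx_eqmx m k (A : 'M[C]_(m, d)) (B : 'M[C]_(k, d)) x :
  (A :=: B)%MS -> satmx A x -> satmx B x.
Proof. by move=> eqAB; apply: satmxS; rewrite eqAB. Qed.

Lemma satmx_pimx m k (A : 'M[C]_(m, d)) (B : 'M[C]_(k, d)) x :
  satmx A x -> satmx (B :&: (orthmx B + A))%MS (pimx B x).
Proof.
by case: HM => _ [_ [_ [_ [Hpi _]]]] /(Hpi _ (spanH B)); rewrite sasaki_spanH.
Qed.

Lemma satmx_pimx0 m (B : 'M[C]_(m, d)) x :
  satmx (0 : 'M[C]_d) (pimx B x) -> satmx (orthmx B) x.
Proof.
case: HM => _ [_ [_ [_ [_ [_ [Hbot _]]]]]].
by rewrite /satmx -botH_spanH -orthH_spanH; apply: Hbot.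
Qed.

Lemma satmx_cap m k (A : 'M[C]_(m, d)) (B : 'M[C]_(k, d)) x :
  (A <= (A :&: B) + (A :&: orthmx B))%MS ->
  satmx A x -> satmx B x -> satmx (A :&: B)%MS x.
Proof.
case: HM => _ [_ [_ [Hmeet _]]] /compatible_spanH compAB Ax Bx.
by rewrite /satmx -meetH_spanH; apply: Hmeet.
Qed.

Lemma satmx_orthmx m k (A : 'M[C]_(m, d)) (B : 'M[C]_(k, d)) x :
  satmx A x -> (A <= orthmx B)%MS -> satmx (orthmx B) x.
Proof.
move=> Ax AB; apply: satmx_pimx0; apply: satmxS (satmx_pimx B Ax).
by rewrite -(capmx_orthmx B) capmxS // addsmx_sub AB submx_refl.
Qed.

Lemma satmx_orth0 m k (A : 'M[C]_(m, d)) (B : 'M[C]_(k, d)) x :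
  satmx A x -> satmx B x -> (A <= orthmx B)%MS -> satmx (0 : 'M[C]_d) x.
Proof.
move=> Ax Bx AB; have splitA : (A <= (A :&: B) + (A :&: orthmx B))%MS.
  by apply: submx_trans (addsmxSr _ _); rewrite sub_capmx submx_refl AB.
apply: satmxS (satmx_cap splitA Ax Bx).
by rewrite capmxC -(capmx_orthmx B) capmxS.
Qed.

Lemma satmx_cap_orthmx m k (A : 'M[C]_(m, d)) (B : 'M[C]_(k, d)) x :
  (orthmx B <= A)%MS -> satmx A x -> satmx B x -> satmx (A :&: B)%MS x.
Proof.
move=> BA; apply: satmx_cap; apply/row_subP => i; set v := row i A.
have [a aB vaB] := orthmx_decomp B v.
have vA : (v <= A)%MS := row_sub i A.
have aA : (a <= A)%MS.
  have -> : a = v - (v - a) by rewrite opprB addrC subrK.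
  by rewrite addmx_sub // eqmx_opp (submx_trans vaB).
rewrite -[v](subrK a) addrC addmx_sub_adds // sub_capmx ?aA ?aB //.
by rewrite vaB addmx_sub // eqmx_opp.
Qed.

End ModelSemantics.

Section FrameEmbedding.
Variables (d : nat) (M : LStructure d).
Hypothesis HM : PQM_model M.
Variables f1 f2 f3 : 'rV[C]_d.
Hypotheses (f11 : hdot f1 f1 = 1) (f22 : hdot f2 f2 = 1) (f33 : hdot f3 f3 = 1)
  (f12 : hdot f1 f2 = 0) (f13 : hdot f1 f3 = 0) (f23 : hdot f2 f3 = 0).

Definition frame_vec (a : vec3) : 'rV[C]_d :=
  (v1 a)%:C *: f1 + (v2 a)%:C *: f2 + (v3 a)%:C *: f3.

Lemma hdot_frame_vec a b : hdot (frame_vec a) (frame_vec b) = (dot3 a b)%:C.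
Proof.
have [f21 f31 f32] : [/\ hdot f2 f1 = 0, hdot f3 f1 = 0 & hdot f3 f2 = 0].
  by rewrite hdotC f12 [hdot f3 _]hdotC f13 [hdot f3 _]hdotC f23 !conjC0.
rewrite !(hdotDl, hdotDr, hdotZl, hdotZr) f11 f22 f33 f12 f13 f23 f21 f31 f32.
by rewrite !conjC_real_complex /dot3 !rmorphD !rmorphM /=; ring.
Qed.

Lemma frame_vec_lin al a be b :
  frame_vec (lin3 al a be b) = al%:C *: frame_vec a + be%:C *: frame_vec b.
Proof. by apply/rowP => j; rewrite !mxE !rmorphD !rmorphM /=; ring. Qed.

Lemma ray_filter_frame_vec (y : M) :
  ray_filter (fun a => satmx (frame_vec a) y) (satmx (0 : 'M[C]_d) y).
Proof.
split.
- move=> a b h /= ya yb hk0; set k := perp3 b a h.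
  have yk : satmx (orthmx (frame_vec k)) y.
    apply: (satmx_orthmx (B := frame_vec k) HM yb); rewrite sub_orthmx_hdot hdot_frame_vec.
    by rewrite /k /perp3 /dot3 /lin3 /=; apply/eqP; congr _%:C; ring.
  have kah : (orthmx (orthmx (frame_vec k)) <= frame_vec a + frame_vec h)%MS.
    by rewrite orthmxK /k /perp3 frame_vec_lin addmx_sub_adds ?scalemx_sub.
  have yah : satmx (frame_vec a + frame_vec h)%MS y := satmxS HM (addsmxSl _ _) ya.
  apply: (satmxS (B := frame_vec (perp3 k a h)) HM _ (satmx_cap_orthmx HM kah yah yk)).
  have -> : frame_vec (perp3 k a h) = hdot (frame_vec h) (frame_vec k) *: frame_vec a
      - hdot (frame_vec a) (frame_vec k) *: frame_vec h.
    by rewrite !hdot_frame_vec /perp3 frame_vec_lin rmorphN scaleNr.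
  by apply: capmx_adds_orthmx; rewrite hdot_frame_vec (inj_eq (@complexI _)).
- move=> a b /= ya yb ab0; apply: (satmx_orth0 HM ya yb).
  by rewrite sub_orthmx_hdot hdot_frame_vec ab0.
- move=> a mu /= ya mu0; apply: (satmx_eqmx HM) ya.
  rewrite /scale3 frame_vec_lin scale0r addr0; apply/eqmx_sym/eqmx_scale.
  by rewrite (inj_eq (@complexI _)).
Qed.

End FrameEmbedding.

Section Main.
Variables (d : nat) (M : LStructure d).
Hypothesis HM : PQM_model M.
Local Notation V := 'rV[C]_d.

Lemma satmx0_nonparallel (y : M) (u v : V) : (3 <= d)%N ->
  satmx u y -> satmx v y -> ~~ (v <= u)%MS -> satmx (0 : 'M[C]_d) y.
Proof.
move=> d3 yu yv vu; have [u0 | u0] := eqVneq u 0.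
  by apply: (satmxS HM) yu; rewrite u0 sub0mx.
have [vu0 | vu0] := eqVneq (hdot v u) 0.
  by apply: (satmx_orth0 HM yv yu); rewrite sub_orthmx_hdot vu0.
have [f1 [f2 [r r0 [f11 f22 f12 uf1 vf]]]] := exists_orthonormal_pair u0 vu vu0.
have [f3 f33 f3o] : exists2 f3 : V, hdot f3 f3 = 1 & (f3 <= orthmx (f1 + f2)%MS)%MS.
  apply: exists_unit_orthmx; apply: (leq_trans _ d3); rewrite ltnS.
  exact: (leq_trans (mxrank_adds_leqif f1 f2).1 (leq_add (rank_leq_row f1) (rank_leq_row f2))).
have [f13 f23] : hdot f1 f3 = 0 /\ hdot f2 f3 = 0.
  by move: f3o; rewrite sub_orthmxC addsmx_sub !sub_orthmx_hdot => /andP[/eqP-> /eqP->].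
apply: (ray_filter_nonorth (ray_filter_frame_vec HM f11 f22 f33 f12 f13 f23 y) r0).
  apply: (satmx_eqmx HM (eqmx_trans uf1 _)) yu.
  by rewrite /frame_vec /= rmorph1 rmorph0 scale1r !scale0r !addr0.
apply: (satmx_eqmx HM (eqmx_trans vf _)) yv.
by rewrite /frame_vec /= rmorph1 rmorph0 scale1r scale0r addr0.
Qed.

Lemma satmx_capmx_orthmx_defect (m : M) (P Q : 'M[C]_d) (u : V) : (3 <= d)%N ->
  satmx P m -> satmx Q m ->
  (u <= P)%MS -> (u <= orthmx (P :&: Q))%MS -> ~~ (u <= orthmx Q)%MS ->
  satmx (P :&: orthmx u)%MS m.
Proof.
move=> d3 mP mQ uP uPQ uQ; set W := (P :&: orthmx u)%MS.
set y := pimx (orthmx W) m.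
have yu : satmx u y.
  apply: (satmxS HM) (satmx_pimx HM (orthmx W) mP).
  apply: submx_trans (capmx_orthmx_relcompl uP); rewrite capmxC.
  apply: capmxS (submx_refl _).
  by rewrite addsmx_sub submx_refl andbT orthmxK capmxSl.
have [v [vs vu uc]] := exists_proj_nonparallel uP uPQ uQ.
have ys : satmx (orthmx W :&: (W + Q))%MS y.
  apply: (satmxS HM) (satmx_pimx HM (orthmx W) mQ).
  apply: capmxS (submx_refl _) (addsmxS _ (submx_refl _)).
  by rewrite orthmxK submx_refl.
have yv : satmx v y.
  apply: (satmxS HM) (capmx_orthmx_relcompl vs) _.
  apply: (satmx_cap_orthmx HM) ys (satmx_orthmx HM yu uc).
  by rewrite orthmxK capmxSl.
exact: (satmx_eqmx HM) (orthmxK W) (satmx_pimx0 HM (satmx0_nonparallel d3 yu yv vu)).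
Qed.

Lemma not_minimal_spanH (m : M) (P Q : 'M[C]_d) : (3 <= d)%N ->
  satmx P m -> satmx Q m -> ~~ (P :&: orthmx (P :&: Q) <= orthmx Q)%MS ->
  ~ minimal_in (filt M m) (spanH P).
Proof.
move=> d3 mP mQ; case/row_subPn => i; set u := row i _ => uQ.
have /andP[uP uPQ] : (u <= P)%MS && (u <= orthmx (P :&: Q))%MS.
  by rewrite -sub_capmx row_sub.
have mW := satmx_capmx_orthmx_defect d3 mP mQ uP uPQ uQ.
case=> _ /(_ _ mW); rewrite leH_spanH capmxSl => /(_ isT)/eqmx_spanH WP.
apply/negP: uQ; have /hdotvv_eq0-> : hdot u u = 0.
  rewrite -WP in uP; apply/eqP; rewrite -sub_orthmx_hdot.
  exact: (submx_trans uP (capmxSr _ _)).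
by rewrite sub0mx.
Qed.

End Main.

Theorem mainTheorem9 (d : nat) (M : LStructure d) (m : M) (p q : Hd d) :
  (3 <= d)%N -> PQM_model M ->
  filt M m p -> filt M m q -> ~ compatible p q ->
  ~ minimal_in (filt M m) p /\ ~ minimal_in (filt M m) q.
Proof.
move=> d3 HM /satmx_Hmx mp /satmx_Hmx mq ncomp.
have defect_p : ~~ (Hmx p :&: orthmx (Hmx p :&: Hmx q) <= orthmx (Hmx q))%MS.
  by apply/negP => /compatible_spanH_defect; rewrite !spanH_Hmx.
have defect_q : ~~ (Hmx q :&: orthmx (Hmx q :&: Hmx p) <= orthmx (Hmx p))%MS.
  apply/negP => /capmx_orthmx_defectC /compatible_spanH_defect.
  by rewrite !spanH_Hmx.
rewrite -(spanH_Hmx p) -(spanH_Hmx q).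
by split; [exact: (not_minimal_spanH HM d3 mp mq) | exact: (not_minimal_spanH HM d3 mq mp)].
Qed.
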